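(* Let $A<0<B$ be integers and let $\mu\in\mathcal M_0(\mathbb Z)$ satisfy $\mu([A,B])=1$, $\mu(\{A\})>0$, $\mu(\{B\})>0$. Let $$\mathcal R_\mu=\{\mathbf r\in[0,1]^{\mathbb Z}: r_i=1\text{ for } i\notin(A,B),\ \text{and } \mathbb P(S_{\tau(\mathbf r)}=i)\le\mu(\{i\})\text{ for } i\in(A,B)\}.$$ Then $\mathcal R_\mu$ has a maximal element $\mathbf r^{\max}$, i.e. $r^{\max}_i\ge r_i$ for all $i\in\mathbb Z$ and all $\mathbf r\in\mathcal R_\mu$, and $\tau(\mathbf r^{\max})\in\mathrm{SEP}(\mathbb F^{S,\boldsymbol\xi},\mu)$; that is, $S_{\tau(\mathbf r^{\max})}\sim\mu$ and $(S_{t\wedge\tau(\mathbf r^{\max})})_{t\ge0}$ is uniformly integrable.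
   Context: $S=(S_t)_{t\ge0}$ is a simple symmetric random walk on $\mathbb Z$ with $S_0=0$ (discrete time). $\mathcal M_0(\mathbb Z)$ is the set of probability measures on $\mathbb Z$ with finite first moment and mean zero. For $\mathbf r=(r_x)_{x\in\mathbb Z}\in[0,1]^{\mathbb Z}$, let $\boldsymbol\xi=\{\xi_{t,x}\}_{t\ge0,x\in\mathbb Z}$ be Bernoulli random variables, mutually independent and independent of $S$, with $\mathbb P(\xi_{t,x}=0)=r_x=1-\mathbb P(\xi_{t,x}=1)$, and $\tau(\mathbf r):=\inf\{t\ge0:\xi_{t,S_t}=0\}$, a stopping time for $\mathbb F^{S,\boldsymbol\xi}$, $\mathcal F^{S,\boldsymbol\xi}_t:=\sigma(S_u,\xi_{u,S_u}:u\le t)$. $\mathrm{SEP}(\mathbb F,\mu)$ is the set of $\mathbb F$-stopping times $\tau$ with $S_\tau\sim\mu$ such that $(S_{t\wedge\tau})_{t\ge0}$ is uniformly integrable. *)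

From Stdlib Require Import Reals ZArith Lra Lia.
Open Scope R_scope.

Definition Zsum_from (f : Z -> R) (a : Z) (n : nat) : R :=
  sum_f_R0 (fun k => f (a + Z.of_nat k)%Z) n.

Definition Zsum_range (f : Z -> R) (a b : Z) : R :=
  Zsum_from f a (Z.to_nat (b - a)).

(* series over Z, summed symmetrically: f 0 + (f 1 + f (-1)) + ... *)
Definition Zterm (f : Z -> R) (n : nat) : R :=
  match n with
  | O => f 0%Z
  | S m => f (Z.of_nat (S m)) + f (- Z.of_nat (S m))%Z
  end.
Definition Z_sum_to (f : Z -> R) (l : R) : Prop := infinite_sum (Zterm f) l.

Definition M0 (mu : Z -> R) : Prop :=
  (forall i, 0 <= mu i) /\
  Z_sum_to mu 1 /\
  (exists m, Z_sum_to (fun i => Rabs (IZR i) * mu i) m) /\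
  Z_sum_to (fun i => IZR i * mu i) 0.

(** For r : Z -> [0,1], with S the SSRW from 0
    and xi_{t,x} independent Bernoulli with P(xi_{t,x}=0) = r x, and
    tau(r) = inf{t : xi_{t,S_t} = 0}:
      pre r t i  = P(tau(r) >= t, S_t = i)
      stopped r t i = P(tau(r) = t, S_t = i) = pre r t i * r i. *)
Fixpoint pre (r : Z -> R) (t : nat) : Z -> R :=
  match t with
  | O => fun i => if Z.eq_dec i 0 then 1 else 0
  | S t' => fun i =>
      / 2 * (pre r t' (i - 1)%Z * (1 - r (i - 1)%Z)
           + pre r t' (i + 1)%Z * (1 - r (i + 1)%Z))
  end.

Definition stopped (r : Z -> R) (t : nat) (i : Z) : R := pre r t i * r i.

(* P(S_{t /\ tau(r)} = i) *)
Definition stopped_proc_law (r : Z -> R) (t : nat) (i : Z) : R :=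
  sum_f_R0 (fun s => if (s <? t)%nat then stopped r s i else 0) t + pre r t i.

(* P(S_{tau(r)} = i) <= p   (the series of P(tau = t, S_t = i) has sum <= p) *)
Definition hit_prob_le (r : Z -> R) (i : Z) (p : R) : Prop :=
  forall N, sum_f_R0 (fun t => stopped r t i) N <= p.

(* P(S_{tau(r)} = i) = p *)
Definition hit_prob_eq (r : Z -> R) (i : Z) (p : R) : Prop :=
  infinite_sum (fun t => stopped r t i) p.

(* (S_{t /\ tau(r)})_t is uniformly integrable:
   lim_{K -> oo} sup_t E[|X_t| 1_{|X_t| >= K}] = 0.
   Since |S_{t /\ tau}| <= t, the expectation is a finite sum over [-t, t]. *)
Definition stopped_UI (r : Z -> R) : Prop :=
  forall eps, 0 < eps -> exists K : R, forall t : nat,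
    Zsum_range (fun i => if Rle_dec K (Rabs (IZR i))
                         then Rabs (IZR i) * stopped_proc_law r t i else 0)
               (- Z.of_nat t)%Z (Z.of_nat t) <= eps.

(* S_{tau(r)} ~ mu and the stopped process is UI.  (tau(r) is an
   F^{S,xi}-stopping time by construction.) *)
Definition in_SEP (r : Z -> R) (mu : Z -> R) : Prop :=
  (forall i, hit_prob_eq r i (mu i)) /\ stopped_UI r.

Definition in_R_mu (A B : Z) (mu : Z -> R) (r : Z -> R) : Prop :=
  (forall i, 0 <= r i <= 1) /\
  (forall i, (i <= A \/ B <= i)%Z -> r i = 1) /\
  (forall i, (A < i < B)%Z -> hit_prob_le r i (mu i)).

From Pilot Require Import Defs.
From Stdlib Require Import Reals ZArith Lra Lia.
Open Scope R_scope.

(** Let [h = U_mu - U_delta0], where [U_nu i = sum_j nu j * |j - i|]. As [mu] is centred with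
    support in [[A, B]], [h] vanishes outside [(A, B)], is positive inside (because [mu] charges
    both [A] and [B]), and its discrete Laplacian [(h (i-1) + h (i+1)) / 2 - h i] is [mu - delta_0].
    For a killing rate [r], the occupation densities [g] of the killed walk solve
    [g = delta_0 + P ((1 - r) g)] and the law of [S_tau] is [r g]. Choosing [rmax = mu / (h + mu)]
    on [(A, B)] makes [(h + mu) (1 - rmax) = h], so [h + mu] solves the occupation equation of
    [rmax], and a maximum principle on [[A, B]] shows it is the limit [g]; hence [S_tau ~ mu].
    For [r] in [R_mu] the same maximum principle gives [h <= g (1 - r)], which together with
    [r g <= mu] yields [r (h + mu) <= mu], i.e. [r <= rmax]. Uniform integrability is free
    because the killed walk never leaves [[A, B]]. *)

Lemma sum_f_R0_ge_term (An : nat -> R) (N k : nat) :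
  (forall n, 0 <= An n) -> (k <= N)%nat -> An k <= sum_f_R0 An N.
Proof.
  intros Hpos Hk; induction N as [|N IH].
  - replace k with 0%nat by lia; simpl; lra.
  - rewrite tech5. destruct (Nat.eq_dec k (S N)) as [->|Hne].
    + pose proof (cond_pos_sum An N Hpos); lra.
    + pose proof (Hpos (S N)); pose proof (IH ltac:(lia)); lra.
Qed.

Lemma sum_f_R0_single (An : nat -> R) (N k : nat) :
  (k <= N)%nat -> (forall n, n <> k -> An n = 0) -> sum_f_R0 An N = An k.
Proof.
  intros Hk Hzero; induction N as [|N IH].
  - replace k with 0%nat by lia; reflexivity.
  - rewrite tech5. destruct (Nat.eq_dec k (S N)) as [->|Hne].
    + rewrite sum_eq_R0; [lra|]. intros n Hn; apply Hzero; lia.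
    + rewrite IH, (Hzero (S N)) by lia; lra.
Qed.

Lemma Un_cv_const (c : R) : Un_cv (fun _ => c) c.
Proof. intros eps Heps; exists 0%nat; intros n _; unfold Rdist; rewrite Rminus_diag, Rabs_R0; lra. Qed.

Lemma Zsum_range_ext (f g : Z -> R) (a b : Z) : (a <= b)%Z ->
  (forall j, (a <= j <= b)%Z -> f j = g j) -> Zsum_range f a b = Zsum_range g a b.
Proof. intros Hab H; unfold Zsum_range, Zsum_from; apply sum_eq; intros k Hk; apply H; lia. Qed.

Lemma Zsum_range_eq0 (f : Z -> R) (a b : Z) : (a <= b)%Z ->
  (forall j, (a <= j <= b)%Z -> f j = 0) -> Zsum_range f a b = 0.
Proof. intros Hab H; unfold Zsum_range, Zsum_from; apply sum_eq_R0; intros k Hk; apply H; lia. Qed.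

Lemma Zsum_range_plus (f g : Z -> R) (a b : Z) :
  Zsum_range (fun j => f j + g j) a b = Zsum_range f a b + Zsum_range g a b.
Proof. apply sum_plus. Qed.

Lemma Zsum_range_minus (f g : Z -> R) (a b : Z) :
  Zsum_range (fun j => f j - g j) a b = Zsum_range f a b - Zsum_range g a b.
Proof. apply minus_sum. Qed.

Lemma Zsum_range_scal (c : R) (f : Z -> R) (a b : Z) :
  Zsum_range (fun j => c * f j) a b = c * Zsum_range f a b.
Proof. unfold Zsum_range, Zsum_from; rewrite scal_sum; apply sum_eq; intros; ring. Qed.

Lemma Zsum_range_nonneg (f : Z -> R) (a b : Z) : (forall j, 0 <= f j) -> 0 <= Zsum_range f a b.
Proof. intros H; apply cond_pos_sum; intros; apply H. Qed.

Lemma Zsum_range_ge_term (f : Z -> R) (a b i : Z) :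
  (forall j, 0 <= f j) -> (a <= i <= b)%Z -> f i <= Zsum_range f a b.
Proof.
  intros H Hi; unfold Zsum_range, Zsum_from.
  replace i with (a + Z.of_nat (Z.to_nat (i - a)))%Z by lia.
  apply (sum_f_R0_ge_term (fun k => f (a + Z.of_nat k)%Z)); [intros; apply H | lia].
Qed.

Lemma Zsum_range_single (f : Z -> R) (a b i : Z) :
  (a <= i <= b)%Z -> (forall j, j <> i -> f j = 0) -> Zsum_range f a b = f i.
Proof.
  intros Hi H; unfold Zsum_range, Zsum_from.
  replace i with (a + Z.of_nat (Z.to_nat (i - a)))%Z by lia.
  apply (sum_f_R0_single (fun k => f (a + Z.of_nat k)%Z)); [lia|].
  intros n Hn; apply H; lia.
Qed.

Lemma Zsum_range_singleton (f : Z -> R) (a : Z) : Zsum_range f a a = f a.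
Proof. unfold Zsum_range, Zsum_from; rewrite Z.sub_diag; simpl; f_equal; lia. Qed.

Lemma Zsum_range_split (f : Z -> R) (a b c : Z) : (a <= b < c)%Z ->
  Zsum_range f a c = Zsum_range f a b + Zsum_range f (b + 1) c.
Proof.
  intros H; unfold Zsum_range, Zsum_from.
  rewrite (tech2 _ (Z.to_nat (b - a)) (Z.to_nat (c - a))) by lia. f_equal.
  replace (Z.to_nat (c - a) - S (Z.to_nat (b - a)))%nat with (Z.to_nat (c - (b + 1))) by lia.
  apply sum_eq; intros k _; f_equal; lia.
Qed.

Lemma Zsum_range_split3 (f : Z -> R) (a A B b : Z) : (a < A <= B)%Z -> (B < b)%Z ->
  Zsum_range f a b = Zsum_range f a (A - 1) + Zsum_range f A B + Zsum_range f (B + 1) b.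
Proof.
  intros H1 H2. rewrite (Zsum_range_split f a (A - 1) b) by lia.
  replace (A - 1 + 1)%Z with A by lia. rewrite (Zsum_range_split f A B b) by lia. ring.
Qed.

Lemma Zterm_partial_sum (f : Z -> R) (N : nat) :
  sum_f_R0 (Zterm f) N = Zsum_range f (- Z.of_nat N) (Z.of_nat N).
Proof.
  induction N as [|N IH].
  - simpl; rewrite Zsum_range_singleton; reflexivity.
  - set (M := Z.of_nat (S N)).
    rewrite tech5, IH, (Zsum_range_split f (- M) (- M) M) by lia.
    replace (- M + 1)%Z with (- Z.of_nat N)%Z by lia.
    rewrite (Zsum_range_split f (- Z.of_nat N) (Z.of_nat N) M) by lia.
    replace (Z.of_nat N + 1)%Z with M by lia.
    rewrite !Zsum_range_singleton; cbn [Zterm]; subst M; ring.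
Qed.

Section CenteredLaw.
Variables (A B : Z) (mu : Z -> R).
Hypotheses (hAB : (A <= B)%Z) (hmu : M0 mu) (hmass : Zsum_range mu A B = 1).

Lemma M0_outside_zero (i : Z) : (i < A \/ B < i)%Z -> mu i = 0.
Proof.
  destruct hmu as [mu_ge0 [mu_sum _]]. intros Hi.
  set (N := (Z.abs A + Z.abs B + Z.abs i + 1)%Z).
  assert (Hpartial : sum_f_R0 (Zterm mu) (Z.to_nat N) <= 1).
  { apply sum_incr; [exact mu_sum|].
    intros [|n]; cbn [Zterm]; [apply mu_ge0|].
    pose proof (mu_ge0 (Z.of_nat (S n))); pose proof (mu_ge0 (- Z.of_nat (S n))%Z); lra. }
  rewrite Zterm_partial_sum, Z2Nat.id, (Zsum_range_split3 mu _ A B) in Hpartial by lia.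
  pose proof (Zsum_range_nonneg mu (- N) (A - 1) mu_ge0).
  pose proof (Zsum_range_nonneg mu (B + 1) N mu_ge0).
  pose proof (mu_ge0 i).
  destruct Hi.
  - pose proof (Zsum_range_ge_term mu (- N) (A - 1) i mu_ge0 ltac:(lia)); lra.
  - pose proof (Zsum_range_ge_term mu (B + 1) N i mu_ge0 ltac:(lia)); lra.
Qed.

Lemma M0_mean_on_range : Zsum_range (fun j => IZR j * mu j) A B = 0.
Proof.
  destruct hmu as [_ [_ [_ mu_mean]]].
  apply (UL_sequence (sum_f_R0 (Zterm (fun j => IZR j * mu j)))); [|exact mu_mean].
  intros eps Heps. exists (Z.to_nat (Z.abs A + Z.abs B + 1)). intros n Hn.
  rewrite Zterm_partial_sum, (Zsum_range_split3 _ _ A B) by lia.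
  assert (Hout : forall j, (j < A \/ B < j)%Z -> IZR j * mu j = 0)
    by (intros j Hj; rewrite M0_outside_zero by lia; ring).
  rewrite (Zsum_range_eq0 _ (- Z.of_nat n) (A - 1)), (Zsum_range_eq0 _ (B + 1) (Z.of_nat n))
    by (lia || (intros; apply Hout; lia)).
  unfold Rdist; rewrite Rplus_0_l, Rplus_0_r, Rminus_diag, Rabs_R0; lra.
Qed.

End CenteredLaw.

Lemma exists_leftmost_argmax (phi : Z -> R) (a : Z) (n : nat) :
  exists m, (a <= m <= a + Z.of_nat n)%Z /\
    (forall j, (a <= j <= a + Z.of_nat n)%Z -> phi j <= phi m) /\
    (forall j, (a <= j < m)%Z -> phi j < phi m).
Proof.
  induction n as [|n [m [Hm [Hmax Hleft]]]].
  - exists a; split; [lia|split]; intros j Hj; [replace j with a by lia; lra | lia].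
  - destruct (Rlt_le_dec (phi m) (phi (a + Z.of_nat (S n))%Z)) as [Hlt|Hge].
    + exists (a + Z.of_nat (S n))%Z; split; [lia|split]; intros j Hj.
      * destruct (Z.eq_dec j (a + Z.of_nat (S n))) as [->|Hne]; [lra|].
        pose proof (Hmax j ltac:(lia)); lra.
      * pose proof (Hmax j ltac:(lia)); lra.
    + exists m; split; [lia|split; [|exact Hleft]]; intros j Hj.
      destruct (Z.eq_dec j (a + Z.of_nat (S n))) as [->|Hne]; [lra|].
      apply Hmax; lia.
Qed.

Lemma max_principle (phi : Z -> R) (A B : Z) : (A <= B)%Z -> phi A <= 0 -> phi B <= 0 ->
  (forall i, (A < i < B)%Z -> 0 < phi i -> 2 * phi i <= phi (i - 1)%Z + phi (i + 1)%Z) ->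
  forall i, (A <= i <= B)%Z -> phi i <= 0.
Proof.
  intros HAB HA HB Hsub i Hi.
  destruct (exists_leftmost_argmax phi A (Z.to_nat (B - A))) as [m [Hm [Hmax Hleft]]].
  rewrite Z2Nat.id in Hm, Hmax by lia. replace (A + (B - A))%Z with B in Hm, Hmax by lia.
  enough (phi m <= 0) by (pose proof (Hmax i Hi); lra).
  destruct (Rle_lt_dec (phi m) 0) as [|Hpos]; [assumption|exfalso].
  destruct (Z.eq_dec m A) as [->|HmA]; [lra|]. destruct (Z.eq_dec m B) as [->|HmB]; [lra|].
  pose proof (Hsub m ltac:(lia) Hpos). pose proof (Hleft (m - 1)%Z ltac:(lia)).
  pose proof (Hmax (m + 1)%Z ltac:(lia)). lra.
Qed.

Lemma damped_harmonic_eq0 (z c : Z -> R) (A B : Z) : (A <= B)%Z -> z A = 0 -> z B = 0 ->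
  (forall i, (A < i < B)%Z -> 0 <= c i <= 1 /\ z i = c i * (/ 2 * (z (i - 1)%Z + z (i + 1)%Z))) ->
  forall i, (A <= i <= B)%Z -> z i = 0.
Proof.
  intros HAB HA HB Hz i Hi.
  assert (Hdamp : forall k m, (A < k < B)%Z -> 0 < c k * m -> c k * m <= m).
  { intros k m Hk Hpos. destruct (Hz k Hk) as [Hc _]. destruct (Rle_lt_dec m 0); nra. }
  apply Rle_antisym.
  - apply (max_principle z A B); [exact HAB | lra | lra | | exact Hi].
    intros k Hk Hpos. destruct (Hz k Hk) as [_ Hzk]. rewrite Hzk in *.
    pose proof (Hdamp k _ Hk Hpos); lra.
  - enough (- z i <= 0) by lra.
    apply (max_principle (fun j => - z j) A B); [exact HAB | lra | lra | | exact Hi].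
    intros k Hk Hpos. destruct (Hz k Hk) as [_ Hzk]. rewrite Hzk in *.
    pose proof (Hdamp k (- (/ 2 * (z (k - 1)%Z + z (k + 1)%Z))) Hk ltac:(lra)); lra.
Qed.

Definition dirac0 (i : Z) : R := if Z.eq_dec i 0 then 1 else 0.

(* [Defs.pre] is qualified because [Reals] also exports a [pre]. *)
Definition green (r : Z -> R) (N : nat) (i : Z) : R := sum_f_R0 (fun t => Defs.pre r t i) N.

Lemma green_succ (r : Z -> R) (N : nat) (i : Z) :
  green r (S N) i =
  dirac0 i + / 2 * (green r N (i - 1) * (1 - r (i - 1)%Z) + green r N (i + 1) * (1 - r (i + 1)%Z)).
Proof.
  induction N as [|N IH]; [reflexivity|].
  unfold green in *. rewrite (tech5 _ (S N)), IH, !tech5. cbn [Defs.pre]. ring.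
Qed.

Lemma green_limit_eq (r g : Z -> R) : (forall i, Un_cv (fun N => green r N i) (g i)) ->
  forall i, g i = dirac0 i + / 2 * (g (i - 1)%Z * (1 - r (i - 1)%Z) + g (i + 1)%Z * (1 - r (i + 1)%Z)).
Proof.
  intros Hg i. apply (UL_sequence (fun N => green r (N + 1) i)).
  - apply (CV_shift' (fun N => green r N i)), Hg.
  - apply (Un_cv_ext (fun N => dirac0 i + / 2 * (green r N (i - 1) * (1 - r (i - 1)%Z)
                                                + green r N (i + 1) * (1 - r (i + 1)%Z)))).
    { intros N; rewrite Nat.add_1_r; symmetry; apply green_succ. }
    apply CV_plus; [apply Un_cv_const|]. apply CV_mult; [apply Un_cv_const|].
    apply CV_plus; apply CV_mult; try apply Un_cv_const; apply Hg.
Qed.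

Lemma sum_stopped (r : Z -> R) (N : nat) (i : Z) :
  sum_f_R0 (fun t => stopped r t i) N = green r N i * r i.
Proof. unfold green, stopped; rewrite Rmult_comm, scal_sum; reflexivity. Qed.

Section KilledWalk.
Variables (A B : Z) (r : Z -> R).
Hypotheses (hAB : (A < 0 < B)%Z) (r01 : forall i, 0 <= r i <= 1)
  (r_out : forall i, (i <= A \/ B <= i)%Z -> r i = 1).

Lemma pre_nonneg (t : nat) (i : Z) : 0 <= Defs.pre r t i.
Proof.
  revert i; induction t as [|t IH]; intros i; cbn [Defs.pre].
  - destruct Z.eq_dec; lra.
  - pose proof (r01 (i - 1)%Z); pose proof (r01 (i + 1)%Z).
    pose proof (IH (i - 1)%Z); pose proof (IH (i + 1)%Z). nra.
Qed.

Lemma pre_outside (t : nat) (i : Z) : (i < A \/ B < i)%Z -> Defs.pre r t i = 0.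
Proof.
  revert i; induction t as [|t IH]; intros i Hi; cbn [Defs.pre].
  - destruct Z.eq_dec; [lia | reflexivity].
  - destruct Hi.
    + rewrite (IH (i - 1)%Z), (r_out (i + 1)%Z) by lia; ring.
    + rewrite (IH (i + 1)%Z), (r_out (i - 1)%Z) by lia; ring.
Qed.

Lemma green_nonneg (N : nat) (i : Z) : 0 <= green r N i.
Proof. apply cond_pos_sum; intros; apply pre_nonneg. Qed.

Lemma green_le_succ (N : nat) (i : Z) : green r N i <= green r (S N) i.
Proof. unfold green; rewrite tech5; pose proof (pre_nonneg (S N) i); lra. Qed.

Lemma green_bounded (N : nat) (i : Z) : green r N i <= 1 + IZR (B - A) ^ 2.
Proof.
  set (u := fun j => green r N j * (1 - r j)).
  (* [psi] has second difference [-2], which absorbs the source term [dirac0 <= 1]. *)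
  set (psi := fun j => IZR (j - A) * IZR (B - j)).
  assert (Hdirac : forall j, dirac0 j <= 1) by (intros j; unfold dirac0; destruct Z.eq_dec; lra).
  assert (Hsub : forall j, u j <= 1 + / 2 * (u (j - 1)%Z + u (j + 1)%Z)).
  { intros j. pose proof (green_le_succ N j) as Hs. rewrite green_succ in Hs.
    pose proof (green_nonneg N j); pose proof (r01 j); pose proof (Hdirac j).
    unfold u in *; nra. }
  assert (Hpsi : forall j, (A <= j <= B)%Z -> u j <= psi j).
  { intros j Hj. enough (u j - psi j <= 0) by lra.
    apply (max_principle (fun k => u k - psi k) A B); [lia | | | | exact Hj];
      [unfold u, psi; rewrite r_out by lia; rewrite Z.sub_diag; simpl; lra ..|].
    intros k Hk _. pose proof (Hsub k). unfold psi; rewrite !minus_IZR, !plus_IZR. simpl. lra. }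
  assert (Hbound : forall j, u j <= IZR (B - A) ^ 2).
  { intros j. destruct (Z_lt_le_dec j A); [|destruct (Z_lt_le_dec B j)];
      [unfold u; rewrite r_out by lia; pose proof (pow2_ge_0 (IZR (B - A))); lra .. |].
    pose proof (Hpsi j ltac:(lia)). unfold psi in *. rewrite !minus_IZR in *.
    assert (IZR A <= IZR j <= IZR B) by (split; apply IZR_le; lia). nra. }
  pose proof (green_le_succ N i) as Hs. rewrite green_succ in Hs.
  pose proof (Hbound (i - 1)%Z); pose proof (Hbound (i + 1)%Z); pose proof (Hdirac i).
  unfold u in *; lra.
Qed.

Lemma green_cv (i : Z) : {g | Un_cv (fun N => green r N i) g}.
Proof.
  apply growing_cv; [intros N; apply green_le_succ|].
  exists (1 + IZR (B - A) ^ 2); intros x [N ->]; apply green_bounded.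
Qed.

Lemma stopped_proc_law_outside (t : nat) (i : Z) : (i < A \/ B < i)%Z -> stopped_proc_law r t i = 0.
Proof.
  intros Hi. unfold stopped_proc_law. rewrite pre_outside, sum_eq_R0 by
    (assumption || (intros s _; destruct (s <? t)%nat; [unfold stopped; rewrite pre_outside by assumption|]; ring)).
  ring.
Qed.

Lemma killed_walk_UI : stopped_UI r.
Proof.
  intros eps Heps. exists (IZR (B - A)). intros t.
  rewrite Zsum_range_eq0; [lra | lia |]. intros i _.
  destruct Rle_dec as [Hle|]; [|reflexivity].
  rewrite Rabs_Zabs in Hle; apply le_IZR in Hle.
  rewrite stopped_proc_law_outside by lia. ring.
Qed.

End KilledWalk.

Lemma abs_second_difference (x : Z) :
  IZR (Z.abs (x + 1)) + IZR (Z.abs (x - 1)) = 2 * IZR (Z.abs x) + 2 * dirac0 x.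
Proof.
  unfold dirac0; destruct (Z.eq_dec x 0) as [->|Hx]; [simpl; lra|].
  rewrite <- plus_IZR. replace (Z.abs (x + 1) + Z.abs (x - 1))%Z with (2 * Z.abs x)%Z by lia.
  rewrite mult_IZR; simpl; lra.
Qed.

Section Potential.
Variables (A B : Z) (mu : Z -> R).
Hypotheses (hAB : (A < 0 < B)%Z) (mu_ge0 : forall i, 0 <= mu i)
  (mu_out : forall i, (i < A \/ B < i)%Z -> mu i = 0)
  (mu_mass : Zsum_range mu A B = 1)
  (mu_mean : Zsum_range (fun j => IZR j * mu j) A B = 0).

Definition potential (i : Z) : R :=
  Zsum_range (fun j => mu j * IZR (Z.abs (j - i))) A B - IZR (Z.abs i).

(* Mass [1] and mean [0] let one subtract any affine function of [j] inside the sum. *)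
Lemma potential_tilt (c : R) (i : Z) :
  potential i = Zsum_range (fun j => mu j * (IZR (Z.abs (j - i)) - IZR (Z.abs i) - c * IZR j)) A B.
Proof.
  rewrite (Zsum_range_ext _ (fun j => mu j * IZR (Z.abs (j - i))
                                     - (IZR (Z.abs i) * mu j + c * (IZR j * mu j)))) by
    (lia || (intros; ring)).
  rewrite Zsum_range_minus, Zsum_range_plus, !Zsum_range_scal, mu_mass, mu_mean.
  unfold potential; ring.
Qed.

Lemma potential_outside (i : Z) : (i <= A \/ B <= i)%Z -> potential i = 0.
Proof.
  intros [Hi|Hi]; [rewrite (potential_tilt 1) | rewrite (potential_tilt (-1))];
    apply Zsum_range_eq0; try lia; intros j Hj.
  - replace (Z.abs (j - i)) with (j - i)%Z by lia. replace (Z.abs i) with (- i)%Z by lia.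
    rewrite minus_IZR, opp_IZR; ring.
  - replace (Z.abs (j - i)) with (i - j)%Z by lia. replace (Z.abs i) with i by lia.
    rewrite minus_IZR; ring.
Qed.

Lemma potential_pos (i : Z) : 0 < mu A -> 0 < mu B -> (A < i < B)%Z -> 0 < potential i.
Proof.
  intros HA HB Hi. destruct (Z_le_gt_dec 0 i) as [Hi0|Hi0].
  - rewrite (potential_tilt (-1)).
    eapply Rlt_le_trans; [|apply (Zsum_range_ge_term _ A B B); [|lia]].
    + cbv beta. replace (Z.abs (B - i)) with (B - i)%Z by lia. replace (Z.abs i) with i by lia.
      rewrite minus_IZR. assert (IZR i < IZR B) by (apply IZR_lt; lia). nra.
    + intros j. apply Rmult_le_pos; [apply mu_ge0|].
      replace (Z.abs i) with i by lia.
      assert (IZR (i - j) <= IZR (Z.abs (j - i))) by (apply IZR_le; lia).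
      rewrite minus_IZR in *; lra.
  - rewrite (potential_tilt 1).
    eapply Rlt_le_trans; [|apply (Zsum_range_ge_term _ A B A); [|lia]].
    + cbv beta. replace (Z.abs (A - i)) with (i - A)%Z by lia. replace (Z.abs i) with (- i)%Z by lia.
      rewrite minus_IZR, opp_IZR. assert (IZR A < IZR i) by (apply IZR_lt; lia). nra.
    + intros j. apply Rmult_le_pos; [apply mu_ge0|].
      replace (Z.abs i) with (- i)%Z by lia.
      assert (IZR (j - i) <= IZR (Z.abs (j - i))) by (apply IZR_le; lia).
      rewrite minus_IZR, opp_IZR in *; lra.
Qed.

Lemma Zsum_range_mu_dirac (i : Z) : Zsum_range (fun j => mu j * dirac0 (j - i)) A B = mu i.
Proof.
  assert (Hoff : forall j, j <> i -> mu j * dirac0 (j - i) = 0).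
  { intros j Hj; unfold dirac0; destruct Z.eq_dec; [lia | ring]. }
  destruct (Z_le_dec A i); [destruct (Z_le_dec i B)|].
  { rewrite (Zsum_range_single _ A B i) by (lia || exact Hoff).
    unfold dirac0; rewrite Z.sub_diag; simpl; ring. }
  all: rewrite mu_out by lia; apply Zsum_range_eq0; [lia|]; intros j Hj; apply Hoff; lia.
Qed.

Lemma potential_laplacian (i : Z) :
  potential i + mu i = dirac0 i + / 2 * (potential (i - 1) + potential (i + 1)).
Proof.
  assert (Hsum : Zsum_range (fun j => mu j * IZR (Z.abs (j - (i - 1)))) A B
               + Zsum_range (fun j => mu j * IZR (Z.abs (j - (i + 1)))) A B
               = 2 * Zsum_range (fun j => mu j * IZR (Z.abs (j - i))) A B + 2 * mu i).
  { rewrite <- Zsum_range_plus, <- (Zsum_range_mu_dirac i), <- !Zsum_range_scal, <- Zsum_range_plus.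
    apply Zsum_range_ext; [lia|]; intros j _.
    replace (j - (i - 1))%Z with (j - i + 1)%Z by lia.
    replace (j - (i + 1))%Z with (j - i - 1)%Z by lia.
    rewrite <- Rmult_plus_distr_l, abs_second_difference; ring. }
  pose proof (abs_second_difference i). unfold potential; lra.
Qed.

End Potential.

Lemma hit_prob_le_of_eq (r : Z -> R) (i : Z) (p : R) :
  (forall j, 0 <= r j <= 1) -> hit_prob_eq r i p -> hit_prob_le r i p.
Proof.
  intros Hr Hp N. apply sum_incr; [exact Hp|]. intros t.
  apply Rmult_le_pos; [apply pre_nonneg, Hr | apply Hr].
Qed.

Section MaximalRate.
Variables (A B : Z) (mu : Z -> R).
Hypotheses (hAB : (A < 0 < B)%Z) (mu_ge0 : forall i, 0 <= mu i)
  (mu_out : forall i, (i < A \/ B < i)%Z -> mu i = 0)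
  (mu_mass : Zsum_range mu A B = 1)
  (mu_mean : Zsum_range (fun j => IZR j * mu j) A B = 0)
  (hA : 0 < mu A) (hB : 0 < mu B).

Local Notation h := (potential A B mu).

Definition rmax (i : Z) : R :=
  if Z_lt_dec A i then if Z_lt_dec i B then mu i / (h i + mu i) else 1 else 1.

Lemma rmax_outside (i : Z) : (i <= A \/ B <= i)%Z -> rmax i = 1.
Proof. intros Hi; unfold rmax; destruct (Z_lt_dec A i), (Z_lt_dec i B); trivial; lia. Qed.

Lemma rmax_inside (i : Z) : (A < i < B)%Z -> rmax i = mu i / (h i + mu i).
Proof. intros Hi; unfold rmax; destruct (Z_lt_dec A i), (Z_lt_dec i B); trivial; lia. Qed.

Lemma rmax_balance (i : Z) : (h i + mu i) * rmax i = mu i /\ (h i + mu i) * (1 - rmax i) = h i.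
Proof.
  destruct (Z_le_gt_dec i A) as [HiA|HiA]; [|destruct (Z_le_gt_dec B i) as [HBi|HBi]];
    [rewrite rmax_outside, potential_outside by (assumption || lia); split; ring .. |].
  rewrite rmax_inside by lia.
  assert (0 < h i) by (apply potential_pos; auto; lia).
  pose proof (mu_ge0 i); split; field; lra.
Qed.

Lemma rmax_bounds (i : Z) : 0 <= rmax i <= 1.
Proof.
  destruct (Z_le_gt_dec i A) as [HiA|HiA]; [|destruct (Z_le_gt_dec B i) as [HBi|HBi]];
    [rewrite rmax_outside by lia; lra .. |].
  assert (0 < h i) by (apply potential_pos; auto; lia).
  pose proof (mu_ge0 i); destruct (rmax_balance i). split; nra.
Qed.

Lemma rmax_green_limit (i : Z) : Un_cv (fun N => green rmax N i) (h i + mu i).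
Proof.
  pose (g j := proj1_sig (green_cv A B rmax hAB rmax_bounds rmax_outside j)).
  assert (Hg : forall j, Un_cv (fun N => green rmax N j) (g j)) by (intros j; apply proj2_sig).
  set (z j := (g j - (h j + mu j)) * (1 - rmax j)).
  assert (Hexcess : forall j, g j - (h j + mu j) = / 2 * (z (j - 1)%Z + z (j + 1)%Z)).
  { intros j. pose proof (green_limit_eq rmax g Hg j).
    pose proof (potential_laplacian A B mu hAB mu_out j).
    destruct (rmax_balance (j - 1)%Z) as [_ E1], (rmax_balance (j + 1)%Z) as [_ E2].
    unfold z; lra. }
  assert (Hz : forall j, z j = 0).
  { intros j. destruct (Z_le_dec A j); [destruct (Z_le_dec j B)|];
      [|unfold z; rewrite rmax_outside by lia; ring ..].
    apply (damped_harmonic_eq0 z (fun k => 1 - rmax k) A B); [lia | | | | lia];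
      [unfold z; rewrite rmax_outside by lia; ring .. |].
    intros k _. split; [pose proof (rmax_bounds k); lra|].
    unfold z at 1; rewrite Hexcess; ring. }
  replace (h i + mu i) with (g i) by (pose proof (Hexcess i); rewrite !Hz in *; lra).
  apply Hg.
Qed.

Lemma rmax_hit (i : Z) : hit_prob_eq rmax i (mu i).
Proof.
  apply (Un_cv_ext (fun N => green rmax N i * rmax i)); [intros; symmetry; apply sum_stopped|].
  rewrite <- (proj1 (rmax_balance i)).
  apply CV_mult; [apply rmax_green_limit | apply Un_cv_const].
Qed.

Lemma rmax_in_R_mu : in_R_mu A B mu rmax.
Proof.
  split; [exact rmax_bounds | split; [exact rmax_outside|]].
  intros i _; apply hit_prob_le_of_eq; [exact rmax_bounds | apply rmax_hit].
Qed.

Lemma green_limit_hit_le (r g : Z -> R) : in_R_mu A B mu r ->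
  (forall j, Un_cv (fun N => green r N j) (g j)) ->
  forall i, (A < i < B)%Z -> g i * r i <= mu i.
Proof.
  intros [_ [_ r_hit]] Hg i Hi.
  apply (Rle_cv_lim (Un := fun N => green r N i * r i) (Vn := fun _ => mu i)).
  - intros N; rewrite <- sum_stopped; apply r_hit, Hi.
  - apply CV_mult; [apply Hg | apply Un_cv_const].
  - apply Un_cv_const.
Qed.

Lemma potential_le_escape (r g : Z -> R) : in_R_mu A B mu r ->
  (forall j, Un_cv (fun N => green r N j) (g j)) ->
  forall i, (A <= i <= B)%Z -> h i <= g i * (1 - r i).
Proof.
  intros Hr Hg i Hi. pose proof (proj1 (proj2 Hr)) as r_out.
  enough (h i - g i * (1 - r i) <= 0) by lra.
  apply (max_principle (fun j => h j - g j * (1 - r j)) A B); [lia | | | | exact Hi];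
    [rewrite potential_outside, r_out by (assumption || lia); lra .. |].
  intros k Hk _. pose proof (green_limit_hit_le r g Hr Hg k Hk).
  pose proof (potential_laplacian A B mu hAB mu_out k). pose proof (green_limit_eq r g Hg k). lra.
Qed.

Lemma rmax_maximal (r : Z -> R) : in_R_mu A B mu r -> forall i, r i <= rmax i.
Proof.
  intros Hr i. pose proof Hr as [r01 [r_out _]].
  destruct (Z_le_gt_dec i A) as [HiA|HiA]; [|destruct (Z_le_gt_dec B i) as [HBi|HBi]];
    [rewrite rmax_outside by lia; apply r01 .. |].
  pose (g j := proj1_sig (green_cv A B r hAB r01 r_out j)).
  assert (Hg : forall j, Un_cv (fun N => green r N j) (g j)) by (intros j; apply proj2_sig).
  pose proof (potential_le_escape r g Hr Hg i ltac:(lia)).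
  pose proof (green_limit_hit_le r g Hr Hg i ltac:(lia)).
  assert (0 < h i) by (apply potential_pos; auto; lia).
  pose proof (mu_ge0 i); pose proof (r01 i). destruct (rmax_balance i) as [Hbal _].
  apply (Rmult_le_reg_l (h i + mu i)); [lra|]. rewrite Hbal. nra.
Qed.

Lemma rmax_in_SEP : in_SEP rmax mu.
Proof. split; [exact rmax_hit | apply (killed_walk_UI A B); [exact hAB | exact rmax_outside]]. Qed.

End MaximalRate.

Theorem proposition1 (A B : Z) (mu : Z -> R)
  (hAB : (A < 0 < B)%Z)
  (hmu : M0 mu)
  (hsupp : Zsum_range mu A B = 1)
  (hA : 0 < mu A) (hB : 0 < mu B) :
  exists rmax : Z -> R,
    in_R_mu A B mu rmax /\
    (forall r, in_R_mu A B mu r -> forall i, r i <= rmax i) /\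
    in_SEP rmax mu.
Proof.
  assert (hle : (A <= B)%Z) by lia.
  pose proof (proj1 hmu) as mu_ge0.
  pose proof (M0_outside_zero A B mu hle hmu hsupp) as mu_out.
  pose proof (M0_mean_on_range A B mu hle hmu hsupp) as mu_mean.
  exists (rmax A B mu); split; [|split].
  - apply rmax_in_R_mu; assumption.
  - apply rmax_maximal; assumption.
  - apply rmax_in_SEP; assumption.
Qed.
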